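(* Let the Schreier families be the standard ones described in the context. If $\alpha$ and $\eta$ are countable ordinals with $\ell(\alpha)\le\eta$ and $m\in\mathbb{N}$, then $\mathcal{S}_\alpha[\mathcal{S}_{\omega^\eta\cdot m}]=\mathcal{S}_{\omega^\eta\cdot m+\alpha}$.
   Context: For finite $E,F\subseteq\mathbb{N}$, $E<F$ means $\max E<\min F$. $\mathcal{M}[\mathcal{N}]=\{\bigcup_{i=1}^kF_i:F_i\in\mathcal{N},F_1<\dots<F_k,\{\min F_1,\dots,\min F_k\}\in\mathcal{M}\}$. For a countable ordinal $\eta\ne0$ with Cantor normal form $\omega^{\gamma_1}k_1+\dots+\omega^{\gamma_p}k_p$ ($\gamma_1>\dots>\gamma_p$), $\ell(\eta)=\gamma_1$ (and $\ell(0)=0$). Schreier families: $\mathcal{S}_0=\{\{n\}:n\in\mathbb{N}\}\cup\{\emptyset\}$, $\mathcal{S}_1=\{F\subseteq\mathbb{N}\text{ finite}:|F|\le\min F\}$, $\mathcal{S}_{\beta+1}=\mathcal{S}_1[\mathcal{S}_\beta]$, and for a countable limit ordinal $\beta$ with associated sequence $\hat\beta_n\uparrow\beta$, $\mathcal{S}_\beta=\{F:F\in\mathcal{S}_{\hat\beta_n}\text{ for some }n\le\min F\}$. Standard choice: fix for every countable limit ordinal $\lambda$ a sequence $(\zeta_n)$ strictly increasing to $\lambda$; for a limit ordinal $\beta=\omega^{\beta_1}m_1+\dots+\omega^{\beta_k}m_k$ (Cantor normal form, $\beta_k\ge1$) set $\hat\beta_n=\omega^{\beta_1}m_1+\dots+\omega^{\beta_k}(m_k-1)+\omega^{\beta_k-1}\cdot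 n$ if $\beta_k$ is a successor, and $\hat\beta_n=\omega^{\beta_1}m_1+\dots+\omega^{\beta_k}(m_k-1)+\omega^{\zeta_n}$ if $\beta_k$ is a limit with fixed sequence $(\zeta_n)\uparrow\beta_k$. *)

From mathcomp Require Import all_boot.
Set Implicit Arguments. Unset Strict Implicit. Unset Printing Implicit Defensive.

Inductive bord : Type :=
| OZ : bord
| OS : bord -> bord
| OL : (nat -> bord) -> bord.   (* OL f denotes sup_n f n *)

Inductive ole : bord -> bord -> Prop :=
| ole_Z b : ole OZ b
| ole_S a b : olt a b -> ole (OS a) b
| ole_L f b : (forall n, ole (f n) b) -> ole (OL f) b
with olt : bord -> bord -> Prop :=
| olt_S a b : ole a b -> olt a (OS b)
| olt_L a g n : olt a (g n) -> olt a (OL g).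

Definition oeq (a b : bord) : Prop := ole a b /\ ole b a.

Fixpoint oadd (a b : bord) : bord :=
  match b with
  | OZ => a
  | OS b' => OS (oadd a b')
  | OL f => OL (fun n => oadd a (f n))
  end.

Fixpoint omuln (a : bord) (m : nat) : bord :=
  match m with
  | 0 => OZ
  | m'.+1 => oadd (omuln a m') a
  end.

Fixpoint wpow (b : bord) : bord :=
  match b with
  | OZ => OS OZ
  | OS b' => OL (fun n => omuln (wpow b') n)
  | OL f => OL (fun n => wpow (f n))
  end.

Definition is_limit (a : bord) : Prop :=
  ~ oeq a OZ /\ forall b, ~ oeq a (OS b).

Fixpoint valid_cnf (L : seq (bord * nat)) : Prop :=
  match L with
  | [::] => True
  | (g, k) :: L' =>
      0 < k /\ valid_cnf L' /\
      match L' with [::] => True | (g', _) :: _ => olt g' g end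
  end.

Definition cnf_eval (L : seq (bord * nat)) : bord :=
  foldr (fun p acc => oadd (omuln (wpow p.1) p.2) acc) OZ L.

Definition is_cnf (b : bord) (L : seq (bord * nat)) : Prop :=
  valid_cnf L /\ oeq (cnf_eval L) b.

(* ell a = g : leading exponent of the CNF of a (and ell 0 = 0) *)
Definition ell_is (a g : bord) : Prop :=
  exists L, is_cnf a L /\
    match L with [::] => oeq g OZ | (g1, _) :: _ => oeq g g1 end.

Definition fundamental (zeta : bord -> nat -> bord) : Prop :=
  (forall l l', oeq l l' -> forall n, oeq (zeta l n) (zeta l' n)) /\
  forall l, is_limit l ->
    (forall n, 0 < n -> olt (zeta l n) (zeta l n.+1)) /\
    (forall n, 0 < n -> olt (zeta l n) l) /\
    (forall g, olt g l -> exists n, 0 < n /\ olt g (zeta l n)).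

(* hat zeta b n g : g is the n-th term hat(b)_n of the associated sequence
   of the limit ordinal b (standard choice). *)
Definition hat (zeta : bord -> nat -> bord) (b : bord) (n : nat) (g : bord)
  : Prop :=
  exists pre bk mk,
    is_cnf b (rcons pre (bk, mk)) /\
    let d := oadd (cnf_eval pre) (omuln (wpow bk) mk.-1) in
    ((exists c, oeq bk (OS c) /\ oeq g (oadd d (omuln (wpow c) n))) \/
     (is_limit bk /\ oeq g (oadd d (wpow (zeta bk n))))).

(* A finite subset of N is represented by the strictly increasing list of
   its elements; a family is a predicate on such lists. *)
Definition S0 (F : seq nat) : Prop :=
  F = [::] \/ exists n, 0 < n /\ F = [:: n].

Definition S1 (F : seq nat) : Prop :=
  sorted ltn F /\ all (fun x => 0 < x) F /\ size F <= head 0 F.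

(* M[N]: unions F_1 u ... u F_k with F_i in N nonempty, F_1 < ... < F_k,
   and {min F_1, ..., min F_k} in M. *)
Definition bracket (M N : seq nat -> Prop) (F : seq nat) : Prop :=
  exists Fs : seq (seq nat),
    F = flatten Fs /\
    (forall i, i < size Fs -> nth [::] Fs i <> [::] /\ N (nth [::] Fs i)) /\
    sorted (fun A B => last 0 A < head 0 B) Fs /\
    M (map (head 0) Fs).

Inductive Sch (zeta : bord -> nat -> bord) : bord -> seq nat -> Prop :=
| Sch_zero a F : oeq a OZ -> S0 F -> Sch zeta a F
| Sch_succ a b F : oeq a (OS b) -> bracket S1 (Sch zeta b) F -> Sch zeta a F
| Sch_lim a n g F : is_limit a -> 0 < n -> (forall x, x \in F -> n <= x) ->
    hat zeta a n g -> Sch zeta g F -> Sch zeta a F.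

(* Write X for omega^eta * m.  The hypothesis ell(alpha) <= eta says that
   alpha < omega^(eta+1), and S_alpha[S_X] = S_(X+alpha) is proved by induction
   on such alpha.  For alpha = beta+1 the
   bracket is associative, so S_(beta+1)[S_X] = S_1[S_beta[S_X]] =
   S_1[S_(X+beta)] = S_(X+beta+1).  For a limit alpha, the Cantor normal form of
   X+alpha is that of alpha with omega^eta * m prepended (or merged into a leading
   term omega^eta * k), and its last term is unchanged; hence the associated
   sequence of X+alpha is X plus that of alpha.  As the minimum of a union of
   blocks is the least minimum of a block, F lies in S_alpha[S_X] iff it lies in
   S_(hat alpha_n)[S_X] = S_(X + hat alpha_n) for some n <= min F. *)

From mathcomp Require Import all_boot.
From Stdlib Require Import Classical IndefiniteDescription Setoid.

Set Implicit Arguments. Unset Strict Implicit. Unset Printing Implicit Defensive.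

(** * Brouwer ordinals *)

Scheme ole_min := Minimality for ole Sort Prop
  with olt_min := Minimality for olt Sort Prop.
Combined Scheme ole_olt_ind from ole_min, olt_min.

Lemma ole_S_inv a b : ole (OS a) b -> olt a b.
Proof. by inversion 1. Qed.

Lemma ole_L_inv f b : ole (OL f) b -> forall n, ole (f n) b.
Proof. by inversion 1. Qed.

Lemma olt_S_inv a b : olt a (OS b) -> ole a b.
Proof. by inversion 1. Qed.

Lemma olt_L_inv a g : olt a (OL g) -> exists n, olt a (g n).
Proof. by inversion 1; exists n. Qed.

Lemma olt_Z a : ~ olt a OZ.
Proof. by inversion 1. Qed.

Lemma ole_OL a f n : ole a (f n) -> ole a (OL f).
Proof.
elim: a n => [|a IH|h IH] n H; constructor.
- by apply: olt_L; apply: ole_S_inv H.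
- by move=> k; apply: (IH k n); apply: ole_L_inv H k.
Qed.

Lemma ole_refl a : ole a a.
Proof.
elim: a => [|a IH|f IH]; constructor; first by constructor.
by move=> n; apply: ole_OL (IH n).
Qed.

Lemma ole_OL_term f n : ole (f n) (OL f).
Proof. exact: ole_OL (ole_refl _). Qed.

Lemma olt_Sa a : olt a (OS a).
Proof. by constructor; apply: ole_refl. Qed.

Lemma ole_SS a b : ole a b -> ole (OS a) (OS b).
Proof. by do 2 constructor. Qed.

Lemma ole_OSr_oltW :
  (forall a b, ole a b -> ole a (OS b)) /\ (forall a b, olt a b -> ole a b).
Proof.
apply: ole_olt_ind => [b|a b _ IH|f b _ IH|a b _ IH|a g n _ IH] //.
- by constructor.
- by do 2 constructor.
- by constructor.
- exact: ole_OL IH.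
Qed.

Lemma ole_OSr a b : ole a b -> ole a (OS b).
Proof. exact: (proj1 ole_OSr_oltW). Qed.

Lemma oltW a b : olt a b -> ole a b.
Proof. exact: (proj2 ole_OSr_oltW). Qed.

Lemma olt_of_upper_bounds a b c :
  (forall d, ole b d -> ole a d) -> olt b c -> olt a c.
Proof.
move=> Hab Hbc; elim: Hbc a Hab => {b c} [b c Hbc|b g n _ IH] a Hab.
- by constructor; apply: Hab.
- exact: olt_L (IH a Hab).
Qed.

Lemma ole_olt_trans :
  (forall a b, ole a b -> forall c, ole b c -> ole a c) /\
  (forall a b, olt a b -> forall c, ole b c -> olt a c).
Proof.
apply: ole_olt_ind => [b c _|a b _ IH c /IH|f b _ IH c Hbc|a b _ IH c /ole_S_inv|
                      a g n _ IH c /ole_L_inv Hgc].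
- by constructor.
- by constructor.
- by constructor=> n; apply: IH.
- exact: olt_of_upper_bounds.
- exact: IH.
Qed.

Lemma ole_trans a b c : ole a b -> ole b c -> ole a c.
Proof. by move=> Hab; apply: (proj1 ole_olt_trans _ _ Hab). Qed.

Lemma olt_le_trans a b c : olt a b -> ole b c -> olt a c.
Proof. by move=> Hab; apply: (proj2 ole_olt_trans _ _ Hab). Qed.

Lemma ole_lt_trans a b c : ole a b -> olt b c -> olt a c.
Proof. by move=> Hab; apply: olt_of_upper_bounds => d; apply: ole_trans. Qed.

Lemma olt_trans a b c : olt a b -> olt b c -> olt a c.
Proof. by move=> Hab /oltW; apply: olt_le_trans. Qed.

Lemma olt_irr a : ~ olt a a.
Proof.
elim: a => [|a IH|f IH] H.
- exact: olt_Z H.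
- exact/IH/ole_S_inv/olt_S_inv.
- have [n Hn] := olt_L_inv H.
  by apply: (IH n); apply: ole_lt_trans Hn; apply: ole_OL_term.
Qed.

Lemma olt_le_false a b : olt a b -> ole b a -> False.
Proof. by move=> Hab Hba; apply: olt_irr (olt_le_trans Hab Hba). Qed.

Lemma ole_or_gt_flip a :
  (forall b, ole a b \/ olt b a) -> forall b, ole b a \/ olt a b.
Proof.
move=> Ha; elim=> [|b _|g IH]; first by left; constructor.
  by case: (Ha b) => H; [right; constructor|left; constructor].
have [Hle|] := classic (forall n, ole (g n) a); first by left; constructor.
case/not_all_ex_not=> n Hn.
by case: (IH n) => // Hlt; right; apply: olt_L Hlt.
Qed.

Lemma ole_or_gt a b : ole a b \/ olt b a.
Proof.
elim: a b => [|a IH|f IH] b; first by left; constructor.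
  by case: (ole_or_gt_flip IH b) => H; [right; constructor|left; constructor].
have [Hle|] := classic (forall n, ole (f n) b); first by left; constructor.
case/not_all_ex_not=> n Hn.
by case: (IH n b) => // Hlt; right; apply: olt_L Hlt.
Qed.

Lemma not_ole a b : ~ ole a b -> olt b a.
Proof. by case: (ole_or_gt a b). Qed.

Lemma not_olt a b : ~ olt a b -> ole b a.
Proof. by case: (ole_or_gt b a). Qed.

Lemma olt_wf : well_founded olt.
Proof.
suff acc_below b a : olt a b -> Acc olt a by move=> a; constructor=> c; apply: acc_below.
elim: b a => [|b IH|g IH] a; first by move/olt_Z.
  by move/olt_S_inv=> Hab; constructor=> c Hca; apply: IH (olt_le_trans Hca Hab).
by case/olt_L_inv=> n; apply: IH.
Qed.

Lemma wf_least T (R : T -> T -> Prop) (P : T -> Prop) x : well_founded R -> P x ->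
  exists y, P y /\ forall z, R z y -> ~ P z.
Proof.
move=> wfR Px; apply: NNPP => Hnone.
elim/(well_founded_ind wfR): x Px => y IH Py.
by apply: Hnone; exists y; split=> // z /IH.
Qed.

Lemma oeq_refl a : oeq a a.
Proof. by split; apply: ole_refl. Qed.

#[local] Hint Resolve ole_refl oeq_refl : core.

Lemma oeq_sym a b : oeq a b -> oeq b a.
Proof. by case. Qed.

Lemma oeq_trans a b c : oeq a b -> oeq b c -> oeq a c.
Proof. by case=> Hab Hba [Hbc Hcb]; split; apply: ole_trans; eassumption. Qed.

Add Parametric Relation : bord oeq
  reflexivity proved by oeq_refl
  symmetry proved by oeq_sym
  transitivity proved by oeq_trans as oeq_rel.

Add Parametric Morphism : ole with signature oeq ==> oeq ==> iff as ole_m.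
Proof.
move=> a a' [Ha Ha'] b b' [Hb Hb']; split=> H.
- exact: ole_trans Ha' (ole_trans H Hb).
- exact: ole_trans Ha (ole_trans H Hb').
Qed.

Add Parametric Morphism : olt with signature oeq ==> oeq ==> iff as olt_m.
Proof.
move=> a a' [Ha Ha'] b b' [Hb Hb']; split=> H.
- exact: ole_lt_trans Ha' (olt_le_trans H Hb).
- exact: ole_lt_trans Ha (olt_le_trans H Hb').
Qed.

Add Parametric Morphism : OS with signature oeq ==> oeq as OS_m.
Proof. by move=> a b [Hab Hba]; split; apply: ole_SS. Qed.

Lemma OL_congr f g : (forall n, oeq (f n) (g n)) -> oeq (OL f) (OL g).
Proof. by move=> H; split; constructor=> n; apply: (@ole_OL _ _ n); case: (H n). Qed.

Lemma OS_inj a b : oeq (OS a) (OS b) -> oeq a b.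
Proof. by case=> /ole_S_inv/olt_S_inv Hab /ole_S_inv/olt_S_inv. Qed.

Lemma is_limit_congr a b : oeq a b -> is_limit a -> is_limit b.
Proof. by move=> E [Ha0 HaS]; split=> [|c]; rewrite -E. Qed.

Lemma zero_succ_or_limit a : oeq a OZ \/ (exists b, oeq a (OS b)) \/ is_limit a.
Proof.
have [|a_neq0] := classic (oeq a OZ); first by left.
have [|a_nsucc] := classic (exists b, oeq a (OS b)); first by right; left.
by right; right; split=> // b Eb; apply: a_nsucc; exists b.
Qed.

Lemma ole_oadd_l a c : ole a (oadd a c).
Proof.
elim: c => [|c IH|g IH] /=; first exact: ole_refl.
- exact: ole_OSr.
- exact: (@ole_OL _ _ 0).
Qed.

Lemma ole_oadd_r a b : ole b (oadd a b).
Proof.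
elim: b => [|b IH|g IH] /=; first by constructor.
- exact: ole_SS.
- by constructor=> n; apply: (@ole_OL _ _ n).
Qed.

Lemma oadd_mono a :
  (forall b c, ole b c -> ole (oadd a b) (oadd a c)) /\
  (forall b c, olt b c -> olt (oadd a b) (oadd a c)).
Proof.
apply: ole_olt_ind => [b|b c _ IH|f c _ IH|b c _ IH|b g n _ IH] /=.
- exact: ole_oadd_l.
- by constructor.
- by constructor.
- by constructor.
- exact: olt_L IH.
Qed.

Lemma oadd_le2l a b c : ole b c -> ole (oadd a b) (oadd a c).
Proof. exact: (proj1 (oadd_mono a)). Qed.

Lemma oadd_lt2l a b c : olt b c -> olt (oadd a b) (oadd a c).
Proof. exact: (proj2 (oadd_mono a)). Qed.

Lemma oadd_le2r a a' b : ole a a' -> ole (oadd a b) (oadd a' b).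
Proof.
move=> H; elim: b => [|b IH|g IH] //=; first exact: ole_SS.
by constructor=> n; apply: (@ole_OL _ _ n).
Qed.

Add Parametric Morphism : oadd with signature oeq ==> oeq ==> oeq as oadd_m.
Proof.
move=> a a' [Ha Ha'] b b' [Hb Hb']; split.
- exact: ole_trans (oadd_le2r _ Ha) (oadd_le2l _ Hb).
- exact: ole_trans (oadd_le2r _ Ha') (oadd_le2l _ Hb').
Qed.

Lemma oaddA a b c : oeq (oadd (oadd a b) c) (oadd a (oadd b c)).
Proof.
elim: c => [|c IH|g IH] /=; [reflexivity|exact: OS_m|exact: OL_congr].
Qed.

Lemma oadd0l a : oeq (oadd OZ a) a.
Proof.
elim: a => [|a IH|g IH] /=; [reflexivity|exact: OS_m|exact: OL_congr].
Qed.

Lemma oadd_le2l_inv a b c : ole (oadd a b) (oadd a c) -> ole b c.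
Proof. by move=> H; case: (ole_or_gt b c) => // /(oadd_lt2l a)/olt_le_false. Qed.

Lemma oadd_cancel a b c : oeq (oadd a b) (oadd a c) -> oeq b c.
Proof. by case=> H1 H2; split; apply: oadd_le2l_inv; eassumption. Qed.

Lemma oadd_pos a b : olt OZ b -> olt a (oadd a b).
Proof. exact: (@oadd_lt2l a OZ). Qed.

Lemma oadd_sub a b : ole a b -> exists d, oeq (oadd a d) b.
Proof.
elim: b => [|b IH|g IH] Hab.
- by exists OZ; split=> //; constructor.
- case: (ole_or_gt a b) => [/IH [d Hd]|Hba]; first by exists (OS d); apply: OS_m.
  by exists OZ; split=> //=; constructor.
have [d Hd] : exists d, forall n, ole (g n) (oadd a (d n)) /\ ole (oadd a (d n)) (OL g).
  apply: (functional_choice (fun n d => ole (g n) (oadd a d) /\ ole (oadd a d) (OL g))) => n.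
  case: (ole_or_gt a (g n)) => [/IH [d [Hd1 Hd2]]|Hgn].
    by exists d; split=> //; apply: ole_trans Hd1 (ole_OL_term _ _).
  by exists OZ; split=> //; apply: oltW.
by exists (OL d); split; constructor=> n; [case: (Hd n)|apply: (@ole_OL _ _ n); case: (Hd n)].
Qed.

Add Parametric Morphism : omuln with signature oeq ==> eq ==> oeq as omuln_m.
Proof. by move=> a a' E n; elim: n => [|n IH] //=; rewrite IH E. Qed.

Lemma omulnD a p q : oeq (omuln a (p + q)) (oadd (omuln a p) (omuln a q)).
Proof. by elim: q => [|q IH]; rewrite ?addn0 // addnS /= IH oaddA. Qed.

Lemma omuln1 a : oeq (omuln a 1) a.
Proof. exact: oadd0l. Qed.

Lemma omuln_le2r a a' n : ole a a' -> ole (omuln a n) (omuln a' n).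
Proof.
move=> H; elim: n => [|n IH] /=; first by constructor.
exact: ole_trans (oadd_le2r _ IH) (oadd_le2l _ H).
Qed.

Lemma omuln_le2l a p q : p <= q -> ole (omuln a p) (omuln a q).
Proof. by move=> /subnKC <-; rewrite omulnD; apply: ole_oadd_l. Qed.

Lemma omuln_lt2l a p q : olt OZ a -> p < q -> olt (omuln a p) (omuln a q).
Proof. by move=> Ha /(omuln_le2l a); apply: olt_le_trans (oadd_pos _ Ha). Qed.

Lemma wpow_pos c : olt OZ (wpow c).
Proof.
elim: c => [|c IH|f IH] /=; first exact: olt_Sa.
- by apply: (@olt_L _ _ 1); rewrite /= oadd0l.
- exact: (@olt_L _ _ 0).
Qed.

Lemma wpow_mono :
  (forall b c, ole b c -> ole (wpow b) (wpow c)) /\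
  (forall b c, olt b c -> forall n, olt (omuln (wpow b) n) (wpow c)).
Proof.
apply: ole_olt_ind => [c|b c _ IH|f c _ IH|b c _ IH n|b g k _ IH n] /=.
- by constructor; apply: wpow_pos.
- by constructor=> n; apply: oltW.
- by constructor.
- apply: (@olt_L _ _ n.+1); apply: ole_lt_trans (omuln_le2r n IH) _.
  exact: omuln_lt2l (wpow_pos _) (ltnSn n).
- exact: olt_L (IH n).
Qed.

Lemma wpow_le b c : ole b c -> ole (wpow b) (wpow c).
Proof. exact: (proj1 wpow_mono). Qed.

Lemma wpow_omuln_lt b c n : olt b c -> olt (omuln (wpow b) n) (wpow c).
Proof. by move=> H; apply: (proj2 wpow_mono). Qed.

Lemma wpow_lt b c : olt b c -> olt (wpow b) (wpow c).
Proof. by move=> /(wpow_omuln_lt 1); rewrite omuln1. Qed.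

Add Parametric Morphism : wpow with signature oeq ==> oeq as wpow_m.
Proof. by move=> a b [Hab Hba]; split; apply: wpow_le. Qed.

Lemma wpow_lt_inv b c : olt (wpow b) (wpow c) -> olt b c.
Proof. by move=> H; case: (ole_or_gt c b) => // /wpow_le/(olt_le_false H). Qed.

Lemma ole_wpow a : ole a (wpow a).
Proof.
elim: a => [|a IH|f IH] /=; first by constructor.
- by constructor; apply: ole_lt_trans IH (wpow_lt (olt_Sa a)).
- by constructor=> n; apply: (@ole_OL _ _ n).
Qed.

(** * Cantor normal forms *)

Definition cnf_below (L : seq (bord * nat)) (g : bord) : Prop :=
  if L is (g', _) :: _ then olt g' g else True.

Lemma cnf_eval_cons g k L : cnf_eval ((g, k) :: L) = oadd (omuln (wpow g) k) (cnf_eval L).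
Proof. by []. Qed.

Lemma cnf_eval_lt L g : valid_cnf L -> cnf_below L g -> olt (cnf_eval L) (wpow g).
Proof.
elim: L g => [|[g1 k1] L IH] g HV Hg; first exact: wpow_pos.
case: HV => _ [HL Hb]; rewrite cnf_eval_cons.
apply: olt_trans (wpow_omuln_lt k1.+1 Hg).
exact: oadd_lt2l (IH g1 HL Hb).
Qed.

Lemma cnf_eval_lt_succ_coef g k L :
  valid_cnf ((g, k) :: L) -> olt (cnf_eval ((g, k) :: L)) (omuln (wpow g) k.+1).
Proof. by case=> _ [HL Hb]; apply: oadd_lt2l; apply: cnf_eval_lt. Qed.

Lemma cnf_eval_lt_succ g k L :
  valid_cnf ((g, k) :: L) -> olt (cnf_eval ((g, k) :: L)) (wpow (OS g)).
Proof.
move/cnf_eval_lt_succ_coef/olt_trans; apply.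
exact: wpow_omuln_lt (olt_Sa g).
Qed.

Lemma cnf_eval_ge g k L : valid_cnf ((g, k) :: L) -> ole (wpow g) (cnf_eval ((g, k) :: L)).
Proof.
case=> k_gt0 _; apply: ole_trans (ole_oadd_l _ _).
by rewrite -{1}(omuln1 (wpow g)); apply: omuln_le2l.
Qed.

Lemma cnf_below_of_lt L b : valid_cnf L -> olt (cnf_eval L) (wpow b) -> cnf_below L b.
Proof.
case: L => [|[g k] L] // HV Hlt.
exact/wpow_lt_inv/(ole_lt_trans (cnf_eval_ge HV) Hlt).
Qed.

Lemma cnf_lead_le g k L g' k' L' : valid_cnf ((g, k) :: L) -> valid_cnf ((g', k') :: L') ->
  ole (cnf_eval ((g, k) :: L)) (cnf_eval ((g', k') :: L')) -> ole g g'.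
Proof.
move=> HV HV' Hle; apply: not_olt => Hlt.
apply: olt_le_false (cnf_eval_lt_succ HV') _.
exact: ole_trans (wpow_le (ole_S Hlt)) (ole_trans (cnf_eval_ge HV) Hle).
Qed.

Lemma cnf_coef_le g k L g' k' L' : oeq g g' ->
  valid_cnf ((g, k) :: L) -> valid_cnf ((g', k') :: L') ->
  ole (cnf_eval ((g, k) :: L)) (cnf_eval ((g', k') :: L')) -> k <= k'.
Proof.
move=> Eg HV HV' Hle; rewrite leqNgt; apply/negP => Hlt.
apply: olt_le_false (cnf_eval_lt_succ_coef HV') _.
apply: ole_trans (omuln_le2r _ (wpow_le (proj2 Eg))) _.
exact: ole_trans (omuln_le2l _ Hlt) (ole_trans (ole_oadd_l _ _) Hle).
Qed.

Fixpoint cnf_equiv (L L' : seq (bord * nat)) : Prop :=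
  match L, L' with
  | [::], [::] => True
  | p :: L1, p' :: L1' => oeq p.1 p'.1 /\ p.2 = p'.2 /\ cnf_equiv L1 L1'
  | _, _ => False
  end.

Lemma cnf_unique L L' : valid_cnf L -> valid_cnf L' ->
  oeq (cnf_eval L) (cnf_eval L') -> cnf_equiv L L'.
Proof.
elim: L L' => [|[g k] L IH] [|[g' k'] L'] //= HV HV' [Hle Hge].
- by case: (olt_le_false (olt_le_trans (wpow_pos g') (cnf_eval_ge HV')) Hge).
- by case: (olt_le_false (olt_le_trans (wpow_pos g) (cnf_eval_ge HV)) Hle).
have Eg : oeq g g' by split; [apply: cnf_lead_le Hle|apply: cnf_lead_le Hge].
have Ek : k = k'.
  apply/eqP; rewrite eqn_leq (cnf_coef_le Eg HV HV' Hle).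
  exact: cnf_coef_le (oeq_sym Eg) HV' HV Hge.
subst k'; split=> //; split=> //.
case: HV HV' => _ [HL _] [_ [HL' _]]; apply: IH => //.
have [Hgg' Hg'g] := Eg.
apply: (@oadd_cancel (omuln (wpow g) k)); split.
- exact: ole_trans Hle (oadd_le2r _ (omuln_le2r _ (wpow_le Hg'g))).
- exact: ole_trans (oadd_le2r _ (omuln_le2r _ (wpow_le Hgg'))) Hge.
Qed.

Lemma cnf_equiv_eval L L' : cnf_equiv L L' -> oeq (cnf_eval L) (cnf_eval L').
Proof.
elim: L L' => [|[g k] L IH] [|[g' k'] L'] //= [Eg [<- HL]].
by rewrite Eg (IH _ HL).
Qed.

Lemma cnf_equiv_rcons pre x L' : cnf_equiv (rcons pre x) L' ->
  exists pre' x', [/\ L' = rcons pre' x', cnf_equiv pre pre', oeq x.1 x'.1 & x.2 = x'.2].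
Proof.
elim: pre L' => [|p pre IH] [|p' L'] //=.
  by case: L' => [|? ?] [E1 [E2 []]] //; exists [::], p'.
case=> E1 [E2 /IH [pre' [x' [-> Hpre Ex1 Ex2]]]].
by exists (p' :: pre'), x'.
Qed.

Lemma cnf_eval_rcons pre x :
  oeq (cnf_eval (rcons pre x)) (oadd (cnf_eval pre) (omuln (wpow x.1) x.2)).
Proof.
elim: pre => [|[g k] pre IH] /=; first by rewrite oadd0l.
by rewrite IH -oaddA.
Qed.

Lemma least_wpow_above_succ a g : olt a (wpow g) ->
  (forall z, olt z g -> ~ olt a (wpow z)) -> oeq a OZ \/ exists c, oeq g (OS c).
Proof.
elim: g => [|c _|f IH] /= Ha Hmin.
- by left; split; [apply: olt_S_inv|constructor].
- by right; exists c.
have [n Hn] := olt_L_inv Ha.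
case: (ole_or_gt (OL f) (f n)) => [Hfn|/Hmin//].
have Efn : oeq (f n) (OL f) by split; [apply: ole_OL_term|].
have Hmin' : forall z, olt z (f n) -> ~ olt a (wpow z) by move=> z; rewrite Efn; apply: Hmin.
case: (IH n Hn Hmin') => [|[c Hc]]; first by left.
by right; exists c; rewrite -Efn.
Qed.

Lemma omuln_floor X a j : olt a (omuln X j) ->
  exists k, ole (omuln X k) a /\ olt a (omuln X k.+1).
Proof.
elim: j => [/olt_Z //|j IH Hj].
by case: (ole_or_gt (omuln X j) a) => [Hja|/IH //]; exists j.
Qed.

Lemma cnf_exists a : exists L, is_cnf a L.
Proof.
elim/(well_founded_ind olt_wf): a => a IH.
have [a0|a_neq0] := classic (oeq a OZ); first by exists [::]; split=> //; symmetry.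
have a_lt : olt a (wpow (OS a)) by apply: ole_lt_trans (ole_wpow a) (wpow_lt (olt_Sa a)).
have [g [Hg Hmin]] := @wf_least _ _ (fun g => olt a (wpow g)) _ olt_wf a_lt.
case: (least_wpow_above_succ Hg Hmin) => [//|[c Ec]].
have Hca : ole (wpow c) a by apply: not_olt; apply: Hmin; rewrite Ec; apply: olt_Sa.
rewrite Ec /= in Hg; have [j Hj] := olt_L_inv Hg.
have [k [Hk Hk1]] := omuln_floor Hj.
have k_gt0 : 0 < k.
  by case: k Hk Hk1 => // _; rewrite omuln1 => Hk1; case: (olt_le_false Hk1 Hca).
have [d Ed] := oadd_sub Hk.
have Hdc : olt d (wpow c).
  by apply: not_ole => Hcd; apply: olt_le_false Hk1 _; rewrite -Ed; apply: oadd_le2l.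
have [Ld [HVd Ed']] := IH d (olt_le_trans Hdc Hca).
exists ((c, k) :: Ld); split; last by rewrite cnf_eval_cons Ed'.
split=> //; split=> //; case: Ld HVd Ed' => [|[g2 k2] Ld] // HVd Ed'.
by apply: wpow_lt_inv; apply: ole_lt_trans Hdc; rewrite -Ed'; apply: cnf_eval_ge.
Qed.

Lemma ell_bound alpha eta : (forall g, ell_is alpha g -> ole g eta) ->
  olt alpha (wpow (OS eta)).
Proof.
move=> Hell; have [[|[g k] L] [HV E]] := cnf_exists alpha; rewrite -E.
  exact: wpow_pos.
apply: olt_le_trans (cnf_eval_lt_succ HV) (wpow_le (ole_SS _)).
by apply: Hell; exists ((g, k) :: L).
Qed.

(** * Associated sequences *)

(* [cnf_base pre bk mk] is omega^beta_1 m_1 + ... + omega^beta_k (m_k - 1) in the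
   definition of the associated sequence, for the normal form [rcons pre (bk, mk)]. *)
Definition cnf_base (pre : seq (bord * nat)) (bk : bord) (mk : nat) : bord :=
  oadd (cnf_eval pre) (omuln (wpow bk) mk.-1).

Add Parametric Morphism pre : (cnf_base pre) with signature oeq ==> eq ==> oeq as cnf_base_m.
Proof. by move=> bk bk' E mk; rewrite /cnf_base E. Qed.

Definition hat_from (zeta : bord -> nat -> bord) (d bk : bord) (n : nat) (g : bord) : Prop :=
  (exists c, oeq bk (OS c) /\ oeq g (oadd d (omuln (wpow c) n))) \/
  (is_limit bk /\ oeq g (oadd d (wpow (zeta bk n)))).

Lemma hatE zeta b n g : hat zeta b n g <->
  exists pre bk mk, is_cnf b (rcons pre (bk, mk)) /\ hat_from zeta (cnf_base pre bk mk) bk n g.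
Proof. by []. Qed.

Lemma is_cnf_congr a b L : oeq a b -> is_cnf a L -> is_cnf b L.
Proof. by move=> E [HV Ea]; split=> //; rewrite Ea. Qed.

Lemma hat_congr zeta a b n g : oeq a b -> hat zeta a n g -> hat zeta b n g.
Proof.
move=> E /hatE [pre [bk [mk [Ha H]]]]; apply/hatE; exists pre, bk, mk.
by split=> //; apply: is_cnf_congr Ha.
Qed.

Lemma hat_from_congr zeta d d' bk bk' n g g' : fundamental zeta ->
  oeq d d' -> oeq bk bk' -> oeq g g' -> hat_from zeta d bk n g -> hat_from zeta d' bk' n g'.
Proof.
move=> [Hz _] Ed Eb Eg [[c [Hc Hg]]|[Hl Hg]].
- left; exists c; split; first by rewrite -Eb.
  by rewrite -Eg -Ed.
- by right; split; [apply: is_limit_congr Hl|rewrite -Eg -Ed Hg (Hz _ _ Eb n)].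
Qed.

Lemma hat_from_shift zeta X d bk n g :
  hat_from zeta (oadd X d) bk n g <-> exists g', hat_from zeta d bk n g' /\ oeq g (oadd X g').
Proof.
split=> [[[c [Hc Hg]]|[Hl Hg]]|[g' [[[c [Hc Hg']]|[Hl Hg']] Hg]]].
- by exists (oadd d (omuln (wpow c) n)); split; [left; exists c|rewrite Hg oaddA].
- by exists (oadd d (wpow (zeta bk n))); split; [right|rewrite Hg oaddA].
- by left; exists c; rewrite Hg Hg' oaddA.
- by right; rewrite Hg Hg' oaddA.
Qed.

Lemma hat_cnfE zeta b pre bk mk n g : fundamental zeta -> is_cnf b (rcons pre (bk, mk)) ->
  hat zeta b n g <-> hat_from zeta (cnf_base pre bk mk) bk n g.
Proof.
move=> Hz [HV Eb]; split=> [/hatE [pre' [bk' [mk' [[HV' Eb'] H]]]]|H]; last first.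
  by apply/hatE; exists pre, bk, mk.
have Eeval : oeq (cnf_eval (rcons pre' (bk', mk'))) (cnf_eval (rcons pre (bk, mk))).
  by rewrite Eb Eb'.
case/cnf_equiv_rcons: (cnf_unique HV' HV Eeval).
move=> pre2 [[bk2 mk2] [/rcons_inj [-> -> ->] Epre /= Ebk <-]].
by apply: hat_from_congr H; rewrite // /cnf_base (cnf_equiv_eval Epre) Ebk.
Qed.

Lemma valid_cnf_rcons_coef pre bk mk : valid_cnf (rcons pre (bk, mk)) -> 0 < mk.
Proof. by elim: pre => [|[g k] pre IH] /= [] // _ [/IH]. Qed.

Lemma cnf_eval_rcons_base pre bk mk : valid_cnf (rcons pre (bk, mk)) ->
  oeq (cnf_eval (rcons pre (bk, mk))) (oadd (cnf_base pre bk mk) (wpow bk)).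
Proof.
move/valid_cnf_rcons_coef; case: mk => // mk _.
by rewrite cnf_eval_rcons /cnf_base oaddA.
Qed.

Lemma hat_lt zeta a n g : fundamental zeta -> 0 < n -> hat zeta a n g -> olt g a.
Proof.
move=> [_ Hz] n_gt0 /hatE [pre [bk [mk [[HV <-] H]]]].
rewrite cnf_eval_rcons_base //; case: H => [[c [Hc ->]]|[Hl ->]]; apply: oadd_lt2l.
- exact: olt_le_trans (wpow_omuln_lt n (olt_Sa c)) (wpow_le (proj2 Hc)).
- exact/wpow_lt/(proj1 (proj2 (Hz _ Hl))).
Qed.

Lemma cnf_rcons_exists a : ~ oeq a OZ -> exists pre bk mk, is_cnf a (rcons pre (bk, mk)).
Proof.
move=> a_neq0; have [[|x L] Ha] := cnf_exists a; first by case: a_neq0; case: Ha => _ /oeq_sym.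
by rewrite lastI in Ha; case: (last x L) Ha => bk mk Ha; exists (belast x L), bk, mk.
Qed.

Lemma hat_exists zeta a : is_limit a -> exists g, hat zeta a 1 g.
Proof.
move=> [a_neq0 a_nsucc]; have [pre [bk [mk Ha]]] := cnf_rcons_exists a_neq0.
have Ea : oeq a (oadd (cnf_base pre bk mk) (wpow bk)).
  by case: Ha => HV <-; apply: cnf_eval_rcons_base.
have [bk0|bk_neq0] := classic (oeq bk OZ).
  by case: (a_nsucc (cnf_base pre bk mk)); rewrite Ea bk0.
have [[c Ec]|bk_nsucc] := classic (exists c, oeq bk (OS c)).
  exists (oadd (cnf_base pre bk mk) (omuln (wpow c) 1)).
  by apply/hatE; exists pre, bk, mk; split=> //; left; exists c.
exists (oadd (cnf_base pre bk mk) (wpow (zeta bk 1))).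
apply/hatE; exists pre, bk, mk; split=> //.
by right; split=> //; split=> // c Ec; apply: bk_nsucc; exists c.
Qed.

Section Shift.

Variables (eta : bord) (m : nat).
Hypothesis m_gt0 : 0 < m.
Let X := omuln (wpow eta) m.

Lemma cnf_shift pre bk mk :
  valid_cnf (rcons pre (bk, mk)) -> cnf_below (rcons pre (bk, mk)) (OS eta) ->
  exists pre' mk', [/\ valid_cnf (rcons pre' (bk, mk')),
    oeq (cnf_eval (rcons pre' (bk, mk'))) (oadd X (cnf_eval (rcons pre (bk, mk)))) &
    oeq (cnf_base pre' bk mk') (oadd X (cnf_base pre bk mk))].
Proof.
move=> HV Hb.
have [g1 [k1 [L1 EL]]] : exists g1 k1 L1, rcons pre (bk, mk) = (g1, k1) :: L1.
  by case: pre {HV Hb} => [|[g1 k1] pre]; [exists bk, mk, [::]|exists g1, k1, (rcons pre (bk, mk))].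
rewrite EL in HV Hb *; case: (ole_or_gt eta g1) => [Hge|Hlt]; last first.
  exists ((eta, m) :: pre), mk; split=> /=.
  - by rewrite EL.
  - by rewrite EL.
  - by rewrite /cnf_base /= oaddA.
have Eg : oeq g1 eta by split=> //; apply: olt_S_inv.
have EX k : oeq (omuln (wpow g1) (m + k)) (oadd X (omuln (wpow g1) k)) by rewrite omulnD Eg.
case: pre EL => [|[g k] pre] /= [-> ->]; last first.
  move=> EL1; exists ((g1, m + k1) :: pre), mk; rewrite /= EL1.
  case: HV => k1_gt0 HV1; split.
  - by split=> //; rewrite addn_gt0 m_gt0.
  - by rewrite EX oaddA.
  - by rewrite /cnf_base /= EX !oaddA.
move=> <-; exists [::], (m + k1); case: HV => k1_gt0 _; split=> //=.
- by rewrite addn_gt0 m_gt0.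
- by rewrite /cnf_base /= !oadd0l -(prednK k1_gt0) addnS /= EX.
Qed.

Lemma hat_shift zeta alpha : fundamental zeta -> ~ oeq alpha OZ -> olt alpha (wpow (OS eta)) ->
  forall n g, hat zeta (oadd X alpha) n g <-> exists g', hat zeta alpha n g' /\ oeq g (oadd X g').
Proof.
move=> Hz a_neq0 a_lt n g.
have [pre [bk [mk [HV Ea]]]] := cnf_rcons_exists a_neq0.
have Hb : cnf_below (rcons pre (bk, mk)) (OS eta) by apply: cnf_below_of_lt; rewrite ?Ea.
have [pre' [mk' [HV' Ea' Ebase]]] := cnf_shift HV Hb.
have HXa : is_cnf (oadd X alpha) (rcons pre' (bk, mk')) by split=> //; rewrite Ea' Ea.
rewrite (hat_cnfE _ _ Hz HXa); setoid_rewrite (hat_cnfE _ _ Hz (conj HV Ea)).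
rewrite -hat_from_shift; split; apply: hat_from_congr => //; by [|symmetry].
Qed.

End Shift.

(** * The bracket operation *)

Definition pos_increasing (F : seq nat) : bool := sorted ltn F && all (fun x => 0 < x) F.

Lemma nth_blocksP (N : seq nat -> Prop) (Fs : seq (seq nat)) :
  (forall i, i < size Fs -> nth [::] Fs i <> [::] /\ N (nth [::] Fs i)) <->
  (forall A, A \in Fs -> A <> [::] /\ N A).
Proof.
split=> [H A HA|H i Hi]; last exact/H/mem_nth.
by rewrite -(nth_index [::] HA); apply: H; rewrite index_mem.
Qed.

Lemma sorted_flatten (Fs : seq (seq nat)) :
  (forall A, A \in Fs -> A <> [::] /\ sorted ltn A) ->
  sorted (fun A B => last 0 A < head 0 B) Fs = sorted ltn (flatten Fs).
Proof.
elim: Fs => [|A Fs IH] // HFs; have [A_ne A_sorted] := HFs A (mem_head _ _).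
have {}IH : sorted (fun A B => last 0 A < head 0 B) Fs = sorted ltn (flatten Fs).
  by apply: IH => B HB; apply: HFs; rewrite inE HB orbT.
case: Fs HFs IH => [|B Fs] HFs IH /=; first by rewrite cats0.
have [B_ne _] : B <> [::] /\ sorted ltn B by apply: HFs; rewrite inE mem_head orbT.
case: A A_ne A_sorted {HFs} => [|a A] // _ /= A_sorted.
case: B B_ne IH => [|b B] // _ /= IH.
by rewrite -cat_cons cat_path /= -IH A_sorted.
Qed.

Definition sbracket (M N : seq nat -> Prop) (F : seq nat) : Prop :=
  exists Fs : seq (seq nat), [/\ F = flatten Fs,
    forall A, A \in Fs -> A <> [::] /\ N A, sorted ltn F & M (map (head 0) Fs)].

Lemma bracket_sbracketE M N F : (forall A, N A -> sorted ltn A) ->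
  bracket M N F <-> sbracket M N F.
Proof.
move=> HN; have HNs Fs : (forall A, A \in Fs -> A <> [::] /\ N A) ->
    forall A, A \in Fs -> A <> [::] /\ sorted ltn A.
  by move=> HFs A /HFs [? /HN].
split=> [[Fs [-> [/nth_blocksP HFs [Hs HM]]]]|[Fs [-> HFs Hs HM]]]; exists Fs.
  by split=> //; rewrite -sorted_flatten //; apply: HNs.
by split=> //; split; [apply/nth_blocksP|split=> //; rewrite sorted_flatten //; apply: HNs].
Qed.

Lemma bracket_pos_increasing M N F : (forall A, N A -> pos_increasing A) ->
  bracket M N F -> pos_increasing F.
Proof.
move=> HN [Fs [-> [/nth_blocksP HFs [Hs _]]]].
apply/andP; split.
  by rewrite -sorted_flatten // => A /HFs [? /HN /andP []].
by apply/allP=> x /flattenP [A /HFs [_ /HN /andP [_ /allP]]]; apply.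
Qed.

Lemma sbracket_ext M M' N N' F : (forall A, M A <-> M' A) -> (forall A, N A <-> N' A) ->
  sbracket M N F <-> sbracket M' N' F.
Proof.
move=> HM HN; split=> -[Fs [EF HFs Hs HMs]]; exists Fs; split=> //; try exact/HM.
- by move=> A /HFs [? /HN].
- by move=> A /HFs [? /HN].
Qed.

Lemma subseq_flatten (A : seq nat) Fs : A \in Fs -> subseq A (flatten Fs).
Proof.
elim: Fs => [|B Fs IH] //; rewrite inE => /orP [/eqP ->|/IH HA]; first exact: prefix_subseq.
exact: subseq_trans HA (suffix_subseq _ _).
Qed.

Lemma heads_subseq (Fs : seq (seq nat)) : (forall A, A \in Fs -> A <> [::]) ->
  subseq (map (head 0) Fs) (flatten Fs).
Proof.
elim: Fs => [|[|a A] Fs IH] // HFs; first by case: (HFs _ (mem_head _ _)).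
rewrite /= eqxx; apply: subseq_trans (suffix_subseq A _).
by apply: IH => B HB; apply: HFs; rewrite inE HB orbT.
Qed.

Lemma head_flatten (Fs : seq (seq nat)) : (forall A, A \in Fs -> A <> [::]) ->
  head 0 (flatten Fs) = head 0 (map (head 0) Fs).
Proof. by case: Fs => [|[|a A] Fs] // /(_ _ (mem_head _ _)). Qed.

Lemma flatten_neq_nil (Fs : seq (seq nat)) : (forall A, A \in Fs -> A <> [::]) ->
  Fs <> [::] -> flatten Fs <> [::].
Proof. by case: Fs => [|[|a A] Fs] // /(_ _ (mem_head _ _)). Qed.

Lemma flatten_map_flatten (Fss : seq (seq (seq nat))) :
  flatten (map flatten Fss) = flatten (flatten Fss).
Proof. by elim: Fss => [|Fs Fss IH] //=; rewrite flatten_cat IH. Qed.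

Lemma sbracket_assoc_r M N P F :
  sbracket (sbracket M N) P F -> sbracket M (sbracket N P) F.
Proof.
case=> Hs [-> HHs Hsort [Es [EHs HEs _ HM]]].
pose Fss := reshape (shape Es) Hs.
have EFss : flatten Fss = Hs by apply: reshapeKr; rewrite -size_flatten -EHs size_map.
have EEs : map (map (head 0)) Fss = Es by rewrite map_reshape EHs flattenK.
have HFs Fs : Fs \in Fss -> (forall A, A \in Fs -> A <> [::]) /\ map (head 0) Fs \in Es.
  move=> HFs; split; last by rewrite -EEs map_f.
  move=> A HA; suff /HHs [] : A \in Hs by [].
  by rewrite -EFss; apply/flattenP; exists Fs.
exists (map flatten Fss); split; first by rewrite flatten_map_flatten EFss.
- move=> _ /mapP [Fs HFs' ->]; have [Fs_ne /HEs [heads_ne HN]] := HFs Fs HFs'.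
  split; first by apply: flatten_neq_nil => // Fs0; rewrite Fs0 in heads_ne.
  exists Fs; split=> //.
    by move=> A HA; apply: HHs; rewrite -EFss; apply/flattenP; exists Fs.
  apply: (subseq_sorted ltn_trans _ Hsort).
  by rewrite -EFss -flatten_map_flatten; apply/subseq_flatten/map_f.
- exact: Hsort.
- suff -> : map (head 0) (map flatten Fss) = map (head 0) Es by [].
  rewrite -EEs -!map_comp; apply/eq_in_map => Fs /HFs [Fs_ne _] /=.
  exact: head_flatten.
Qed.

Lemma sbracket_blocks_choice N P Gs : (forall G, G \in Gs -> G <> [::] /\ sbracket N P G) ->
  exists Fss, Gs = map flatten Fss /\ forall Fs, Fs \in Fss ->
    [/\ Fs <> [::], forall A, A \in Fs -> A <> [::] /\ P A & N (map (head 0) Fs)].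
Proof.
elim: Gs => [|G Gs IH] HGs; first by exists [::].
have [|Fss [-> HFss]] := IH; first by move=> G' HG'; apply: HGs; rewrite inE HG' orbT.
have [G_ne [Fs [EG HFs _ HN]]] := HGs G (mem_head _ _).
exists (Fs :: Fss); split; first by rewrite EG.
move=> Fs'; rewrite inE => /orP [/eqP ->|/HFss //]; split=> //.
by move=> Fs0; rewrite Fs0 in EG.
Qed.

Lemma sbracket_assoc_l M N P F :
  sbracket M (sbracket N P) F -> sbracket (sbracket M N) P F.
Proof.
case=> Gs [-> HGs Hsort HM]; have [Fss [EGs HFss]] := sbracket_blocks_choice HGs.
have HA A : A \in flatten Fss -> A <> [::] /\ P A.
  by case/flattenP=> Fs /HFss [_ HFs _]; apply: HFs.
exists (flatten Fss); split=> //; first by rewrite EGs flatten_map_flatten.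
exists (map (map (head 0)) Fss); split.
- by rewrite map_flatten.
- by move=> _ /mapP [Fs /HFss [Fs_ne _ HN] ->]; split=> //; case: Fs Fs_ne {HN}.
- apply: (subseq_sorted ltn_trans _ Hsort); rewrite EGs flatten_map_flatten.
  by apply: heads_subseq => A /HA [].
- suff <- : map (head 0) Gs = map (head 0) (map (map (head 0)) Fss) by [].
  rewrite EGs -!map_comp; apply/eq_in_map => Fs /HFss [_ HFs _] /=.
  by apply: head_flatten => A /HFs [].
Qed.

Lemma sbracketA M N P F : sbracket M (sbracket N P) F <-> sbracket (sbracket M N) P F.
Proof. by split; [apply: sbracket_assoc_l|apply: sbracket_assoc_r]. Qed.

Lemma sbracket_S0 N F : N [::] -> (forall A, N A -> pos_increasing A) ->
  sbracket S0 N F <-> N F.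
Proof.
move=> N0 HN; split=> [[Fs [-> HFs _ [|[n [_]]]]]|HF].
- by case: Fs HFs.
- case: Fs HFs => [|A [|]] // HFs _; rewrite /= cats0.
  by case: (HFs A (mem_head _ _)).
have /andP [F_sorted F_pos] := HN F HF.
case: F HF F_sorted F_pos => [|a F] HF F_sorted F_pos.
  by exists [::]; split=> //; left.
exists [:: a :: F]; split=> //=; first by rewrite cats0.
  by move=> A; rewrite inE => /eqP ->.
by right; exists a; case/andP: F_pos.
Qed.

Lemma head_le (A : seq nat) x : sorted ltn A -> x \in A -> head 0 A <= x.
Proof.
case: A => [|a A] //= A_sorted; rewrite inE => /orP [/eqP -> //|Hx].
exact/ltnW/(allP (order_path_min ltn_trans A_sorted)).
Qed.

Lemma flatten_lower_bound (Fs : seq (seq nat)) n :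
  (forall A, A \in Fs -> A <> [::] /\ sorted ltn A) ->
  (forall x, x \in map (head 0) Fs -> n <= x) <-> (forall x, x \in flatten Fs -> n <= x).
Proof.
move=> HFs; split=> [Hheads x /flattenP [A HA Hx]|Hall _ /mapP [A HA ->]].
  have [_ A_sorted] := HFs A HA.
  exact: leq_trans (Hheads _ (map_f _ HA)) (head_le A_sorted Hx).
apply: Hall; apply/flattenP; exists A => //.
by case: A HA => [/HFs []|a A _] //; apply: mem_head.
Qed.

(** * Schreier families *)

Lemma Sch_pos_increasing zeta a F : Sch zeta a F -> pos_increasing F.
Proof.
(* [Sch] occurs nested inside [bracket], so its induction principle gives no
   hypothesis for the blocks: recurse structurally by hand. *)
move: a F; fix IH 3 => a F [{}a {}F _ [->|[n [n_gt0 ->]]]|{}a b {}F _ HF|{}a n g {}F _ _ _ _ HF].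
- by [].
- by rewrite /pos_increasing /= n_gt0.
- case: HF => Fs [EF [HFs rest]]; apply: (@bracket_pos_increasing S1 pos_increasing) => //.
  exists Fs; split=> //; split=> // i /HFs [A_ne HA].
  by split=> //; apply: IH HA.
- exact: IH HF.
Qed.

Lemma Sch_sorted zeta a F : Sch zeta a F -> sorted ltn F.
Proof. by case/Sch_pos_increasing/andP. Qed.

Lemma Sch_congr zeta a b F : oeq a b -> Sch zeta a F -> Sch zeta b F.
Proof.
move=> + HF; case: HF => [{}a {}F Ha HF|{}a c {}F Ha HF|{}a n g {}F Ha n_gt0 HFn Hg HF] E.
- by apply: Sch_zero HF; rewrite -E.
- by apply: Sch_succ HF; rewrite -E.
- by apply: Sch_lim n_gt0 HFn (hat_congr E Hg) HF; apply: is_limit_congr Ha.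
Qed.

Lemma Sch_congrE zeta a b F : oeq a b -> Sch zeta a F <-> Sch zeta b F.
Proof. by move=> E; split; apply: Sch_congr; rewrite E. Qed.

Lemma OS_neq0 b : ~ oeq (OS b) OZ.
Proof. by case=> /ole_S_inv/olt_Z. Qed.

Lemma Sch_zeroE zeta a F : oeq a OZ -> Sch zeta a F <-> S0 F.
Proof.
move=> Ea; split=> [HF|]; last exact: Sch_zero.
case: HF Ea => [{}a {}F _ //|{}a b {}F Ha _|{}a n g {}F [Ha _] _ _ _ _] Ea //.
by case: (@OS_neq0 b); rewrite -Ha.
Qed.

Lemma Sch_succE zeta a b F : oeq a (OS b) -> Sch zeta a F <-> sbracket S1 (Sch zeta b) F.
Proof.
have HsE c G : bracket S1 (Sch zeta c) G <-> sbracket S1 (Sch zeta c) G.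
  by apply: bracket_sbracketE; apply: Sch_sorted.
move=> Ea; split=> [HF|/HsE]; last exact: Sch_succ.
case: HF Ea => [{}a {}F Ha _|{}a c {}F Ha /HsE HF|{}a n g {}F [_ Ha] _ _ _ _] Ea.
- by case: (@OS_neq0 b); rewrite -Ea.
- have Ecb : oeq c b by apply: OS_inj; rewrite -Ha.
  exact: (proj1 (sbracket_ext F (fun A => iff_refl (S1 A)) (fun A => Sch_congrE zeta A Ecb)) HF).
- by case: (Ha b).
Qed.

Lemma Sch_limitE zeta a F : is_limit a -> Sch zeta a F <->
  exists n g, [/\ 0 < n, forall x, x \in F -> n <= x, hat zeta a n g & Sch zeta g F].
Proof.
move=> Ha; split=> [HF|[n [g [n_gt0 HFn Hg HF]]]]; last exact: Sch_lim HFn Hg HF.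
case: HF Ha => [{}a {}F Ea _|{}a b {}F Ea _|{}a n g {}F _ n_gt0 HFn Hg HF] [Ha0 HaS].
- by [].
- by case: (HaS b).
- by exists n, g.
Qed.

Lemma Sch_nil zeta a : fundamental zeta -> Sch zeta a [::].
Proof.
move=> Hz; elim/(well_founded_ind olt_wf): a => a IH.
case: (zero_succ_or_limit a) => [a0|[[b Eb]|Ha]].
- by apply/Sch_zeroE => //; left.
- by apply/(Sch_succE _ _ Eb); exists [::]; split=> //.
have [g Hg] := hat_exists zeta Ha.
by apply/Sch_limitE => //; exists 1, g; split=> //; apply: IH (hat_lt Hz _ Hg).
Qed.

Lemma oadd_succ_inv X a b : ~ oeq a OZ -> oeq (oadd X a) (OS b) ->
  exists c, oeq a (OS c) /\ oeq b (oadd X c).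
Proof.
move=> a_neq0 E.
have a_gt0 : olt OZ a by apply: not_ole => a_le0; apply: a_neq0; split=> //; constructor.
have [d Ed] : exists d, oeq (oadd X d) b.
  by apply/oadd_sub/olt_S_inv; rewrite -E; apply: oadd_pos.
by exists d; split; [apply: (@oadd_cancel X); rewrite E -Ed|symmetry].
Qed.

Lemma is_limit_oadd X a : is_limit a -> is_limit (oadd X a).
Proof.
case=> a_neq0 a_nsucc; split=> [[Ha _]|b /(oadd_succ_inv a_neq0) [c [Ec _]]].
  by apply: a_neq0; split; [apply: ole_trans (ole_oadd_r X a) Ha|constructor].
exact: a_nsucc Ec.
Qed.

Section ShiftedSchreier.

Variables (zeta : bord -> nat -> bord) (X : bord).
Hypothesis Hz : fundamental zeta.

Definition bracket_shifts (a : bord) : Prop :=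
  forall F, sbracket (Sch zeta a) (Sch zeta X) F <-> Sch zeta (oadd X a) F.

Lemma bracket_shifts_zero a : oeq a OZ -> bracket_shifts a.
Proof.
move=> Ea F; rewrite (Sch_congrE _ _ (oadd_m (oeq_refl X) Ea)) /=.
rewrite -(sbracket_S0 F (Sch_nil X Hz) (@Sch_pos_increasing zeta X)).
exact (sbracket_ext F (fun A => Sch_zeroE zeta A Ea) (fun A => iff_refl (Sch zeta X A))).
Qed.

Lemma bracket_shifts_succ a b : oeq a (OS b) -> bracket_shifts b -> bracket_shifts a.
Proof.
move=> Ea IHb F.
rewrite (Sch_succE _ _ (oadd_m (oeq_refl X) Ea : oeq (oadd X a) (OS (oadd X b)))).
rewrite -(sbracket_ext F (fun A => iff_refl (S1 A)) IHb) sbracketA.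
exact (sbracket_ext F (fun A => Sch_succE zeta A Ea) (fun A => iff_refl (Sch zeta X A))).
Qed.

Lemma bracket_shifts_limit a : is_limit a ->
  (forall n g, hat zeta (oadd X a) n g <-> exists g', hat zeta a n g' /\ oeq g (oadd X g')) ->
  (forall b, olt b a -> bracket_shifts b) -> bracket_shifts a.
Proof.
move=> Ha Hhat IH F; have HXa := is_limit_oadd X Ha.
have HFs Fs : (forall A, A \in Fs -> A <> [::] /\ Sch zeta X A) ->
    forall A, A \in Fs -> A <> [::] /\ sorted ltn A.
  by move=> HFs A /HFs [? /Sch_sorted].
split=> [[Fs [-> HFX Hs /(Sch_limitE _ _ Ha) [n [g [n_gt0 Hn Hg HG]]]]]|].
  apply/(Sch_limitE _ _ HXa); exists n, (oadd X g); split=> //.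
  - by move: Hn; rewrite flatten_lower_bound //; apply: HFs.
  - by apply/Hhat; exists g.
  - by apply/(IH g (hat_lt Hz n_gt0 Hg)); exists Fs.
case/(Sch_limitE _ _ HXa)=> n [g' [n_gt0 Hn /Hhat [g [Hg Eg']] HG]].
have /(IH g (hat_lt Hz n_gt0 Hg)) [Fs [EF HFX Hs HG']] : Sch zeta (oadd X g) F.
  exact: Sch_congr Eg' HG.
exists Fs; split=> //; apply/(Sch_limitE _ _ Ha); exists n, g; split=> //.
by rewrite flatten_lower_bound -?EF //; apply: HFs.
Qed.

End ShiftedSchreier.

Lemma bracket_shifts_below zeta eta m a : fundamental zeta -> 0 < m ->
  olt a (wpow (OS eta)) -> bracket_shifts zeta (omuln (wpow eta) m) a.
Proof.
move=> Hz m_gt0; elim/(well_founded_ind olt_wf): a => a IH a_lt.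
have IHlt b : olt b a -> bracket_shifts zeta (omuln (wpow eta) m) b.
  by move=> Hb; apply: IH Hb (olt_trans Hb a_lt).
case: (zero_succ_or_limit a) => [a0|[[b Eb]|Ha]].
- exact: bracket_shifts_zero.
- by apply: (bracket_shifts_succ Eb); apply: IHlt; rewrite Eb; apply: olt_Sa.
- have [a_neq0 _] := Ha.
  exact: bracket_shifts_limit Ha (hat_shift m_gt0 Hz a_neq0 a_lt) IHlt.
Qed.

Theorem lemma25 (zeta : bord -> nat -> bord) (alpha eta : bord) (m : nat) :
  fundamental zeta -> 0 < m ->
  (forall g, ell_is alpha g -> ole g eta) ->
  forall F : seq nat,
    bracket (Sch zeta alpha) (Sch zeta (omuln (wpow eta) m)) F <->
    Sch zeta (oadd (omuln (wpow eta) m) alpha) F.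
Proof.
move=> Hz m_gt0 Hell F.
rewrite bracket_sbracketE; last exact: Sch_sorted.
exact: bracket_shifts_below Hz m_gt0 (ell_bound Hell) F.
Qed.
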